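(* Let $P$ be a 6-stack and let $Q$ be a retract of $P$ which (with the induced order) is isomorphic to a tower of sections. If there is an integer $i\ge 0$ with $\emptyset\ne P(i)\subseteq Q$, then $Q=P$.
   Context: All posets are finite. For a poset $P$ and $p\in P$, the rank $r(p)$ of $p$ is the largest $m$ such that there is a chain $p_0<\dots<p_m=p$ in $P$. $P$ is ranked of rank $r(P)$ if every maximal chain has exactly $r(P)+1$ elements. For $0\le i\le j$, $P(i,j)=\{p\in P:i\le r(p)\le j\}$, $P(i)=P(i,i)$ (induced order). A subset $Q\subseteq P$ (induced order) is a retract of $P$ if there is an order-preserving $f:P\to Q$ with $f(q)=q$ for all $q\in Q$. The 6-crown $C_6$ is the poset on $\{x_0,x_1,x_2,y_0,y_1,y_2\}$ whose only strict comparabilities are $x_0<y_0>x_1<y_1>x_2<y_2>x_0$. A 6-stack is a ranked poset $P$ of rank $n\ge1$ such that $P(i,i+1)\cong C_6$ for each $0\le i<n$. The ordinal sum of posets $P_1,\dots,P_k$ ($k\ge1$) is their disjoint union ordered by the orders of the $P_i$ together with $p<q$ whenever $p\in P_i,q\in P_j,i<j$. A section is either a two-element antichain or a poset on the set $\{[i,k]: 0\le i\le 2,\ 0\le k\le n\}$ (with $3(n+1)$ distinct elements), for some $n\ge 1$, such that: (1) $[i,k]<[i,l]$ whenever $0\le k<l\le n$; (2) for each $k$, $\{[0,k],[1,k],[2,k]\}$ is an antichain; (3) $[i,k]<[j,l]$ implies $[i+1,k]<[j+1,l]$ (first indices mod $3$); (4) for each $0\le k<n$ there are $i,j$ with $[i,k]\not<[j,k+1]$.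 A tower of sections is an ordinal sum of one or more sections. *)

(* Finite posets are given as a finType T with a strict
   partial order lt : rel T (irreflexive, transitive). *)
From mathcomp Require Import all_boot.
Set Implicit Arguments. Unset Strict Implicit. Unset Printing Implicit Defensive.

Section Posets.
Variable T : finType.
Variable lt : rel T.

Definition spo := irreflexive lt /\ transitive lt.

Definition leo (x y : T) : bool := (x == y) || lt x y.

Definition chain_to (p : T) (m : nat) : bool :=
  [exists t : (m.+1).-tuple T, sorted lt t && (last p t == p)].

(* rank r(p): the largest m with a chain p_0 < ... < p_m = p
   (such chains have distinct elements, hence m < #|T|) *)
Definition rk (p : T) : nat := \max_(m < #|T| | chain_to p m) m.

Definition Pband (i j : nat) : {set T} := [set p | i <= rk p <= j].
Definition Plevel (i : nat) : {set T} := Pband i i.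

Definition is_chain (C : {set T}) : Prop :=
  {in C &, forall x y, x != y -> lt x y || lt y x}.
Definition maximal_chain (C : {set T}) : Prop :=
  is_chain C /\ forall D : {set T}, is_chain D -> C \subset D -> D = C.

Definition ranked_of (n : nat) : Prop :=
  forall C : {set T}, maximal_chain C -> #|C| = n.+1.

Definition iso_sub (U : finType) (ltU : rel U) (S : {set T}) : Prop :=
  exists f : U -> T,
    [/\ injective f, (forall x, f x \in S), (forall y, y \in S -> exists x, f x = y)
      & (forall x y, ltU x y = lt (f x) (f y))].

Definition retract (Q : {set T}) : Prop :=
  exists f : T -> T,
    [/\ (forall x y, leo x y -> leo (f x) (f y)),
        (forall x, f x \in Q) & (forall q, q \in Q -> f q = q)].
End Posets.

(* The 6-crown on 'I_6: x_i := i, y_i := 3 + i (i < 3);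
   x_0<y_0>x_1<y_1>x_2<y_2>x_0, i.e. x_j < y_i iff j = i or j = i+1 mod 3. *)
Definition c6_lt (a b : 'I_6) : bool :=
  [&& (a < 3)%N, (3 <= b)%N & (val a == b - 3) || (val a == (b - 3).+1 %% 3)].

Definition six_stack (T : finType) (lt : rel T) : Prop :=
  exists n : nat, [/\ (1 <= n)%N, ranked_of lt n &
    forall i : nat, (i < n)%N -> iso_sub lt c6_lt (Pband lt i i.+1)].

(* A section (non-antichain case): a poset on {[i,k] : i < 3, k <= n},
   realised as the type 'I_3 * 'I_n.+1 with [i,k] = (i,k). *)
Definition is_section_order (n : nat) (ltS : rel ('I_3 * 'I_n.+1)) : Prop :=
  [/\ spo ltS,
      (forall (i : 'I_3) (k l : 'I_n.+1), (k < l)%N -> ltS (i, k) (i, l)),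
      (forall (i j : 'I_3) (k : 'I_n.+1), ~~ ltS (i, k) (j, k)),
      (forall (i j : 'I_3) (k l : 'I_n.+1),
                   ltS (i, k) (j, l) -> ltS (ordS i, k) (ordS j, l))
    & (forall k : 'I_n.+1, (k < n)%N ->
                   exists (i j : 'I_3) (k' : 'I_n.+1),
                     val k' = k.+1 /\ ~~ ltS (i, k) (j, k'))].

Definition antichain2_lt : rel bool := fun _ _ => false.

Definition iso_section (T : finType) (lt : rel T) (S : {set T}) : Prop :=
  iso_sub lt antichain2_lt S \/
  exists n : nat, (1 <= n)%N /\
    exists ltS : rel ('I_3 * 'I_n.+1), is_section_order ltS /\ iso_sub lt ltS S.

(* Q (induced order) is isomorphic to a tower of sections, i.e. to an ordinal
   sum of k >= 1 sections: Q splits into blocks Q_0,...,Q_{k-1} (block of q is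
   blk q), each isomorphic to a section, with p < q whenever blk p < blk q. *)
Definition iso_tower (T : finType) (lt : rel T) (Q : {set T}) : Prop :=
  exists (k : nat) (blk : T -> nat),
    [/\ (1 <= k)%N,
        (forall q, q \in Q -> (blk q < k)%N),
        (forall j, (j < k)%N -> iso_section lt [set q in Q | blk q == j])
      & (forall p q, p \in Q -> q \in Q -> (blk p < blk q)%N -> lt p q)].

From mathcomp Require Import all_boot zify.
Set Implicit Arguments. Unset Strict Implicit. Unset Printing Implicit Defensive.

(* Grade the 6-stack by rank. Since consecutive levels form 6-crowns, every
   level has three elements, each element lies above two elements of the level
   below and below two of the level above, and elements two levels apart are
   comparable. In a tower of sections incomparable elements lie in the same
   section, so every element of Q has an incomparable partner in Q, and an
   element incomparable to a member of a 3-antichain of Q lies in one itself.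
   Suppose level t lies in Q but some b of level t+1 does not. A 3-antichain of
   Q through an element of level t+1 would be a whole level, four elements with
   b, so level t+1 misses Q entirely. The retraction f then sends each element
   of level t+1 strictly above its two lower covers, to level at least t+2.
   Take e in Q of least level at least t+2, an incomparable partner e' in Q and
   a common lower bound x of level t+1: minimality forces f x = e, whence
   e <= e'. So Q contains level t+1, dually level t-1, and thus everything. *)

Definition incomp (T : finType) (lt : rel T) (x y : T) := ~~ lt x y && ~~ lt y x.

Lemma incompC (T : finType) (lt : rel T) x y : incomp lt x y = incomp lt y x.
Proof. exact: andbC. Qed.

Definition antichain3 (T : finType) (lt : rel T) (x y z : T) :=
  [&& x != y, x != z, y != z, incomp lt x y, incomp lt x z & incomp lt y z].

Lemma antichain3C23 (T : finType) (lt : rel T) x y z :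
  antichain3 lt x y z -> antichain3 lt x z y.
Proof.
case/and5P=> ne_xy ne_xz ne_yz inc_xy /andP [inc_xz inc_yz].
by rewrite /antichain3 ne_xz ne_xy eq_sym ne_yz inc_xz inc_xy incompC.
Qed.

Definition in_antichain3 (T : finType) (lt : rel T) (Q : {set T}) (x : T) :=
  exists y z, [/\ y \in Q, z \in Q & antichain3 lt x y z].

Definition incomp_partners (T : finType) (lt : rel T) (Q : {set T}) :=
  forall q, q \in Q -> exists2 q', q' \in Q & (q' != q) && incomp lt q q'.

Definition in_antichain3_incomp_closed (T : finType) (lt : rel T) (Q : {set T}) :=
  forall q x, q \in Q -> x \in Q -> incomp lt q x -> in_antichain3 lt Q x -> in_antichain3 lt Q q.

(* The consequences of being the rank function of a 6-stack of rank n that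
   the argument needs; the list is closed under order duality. *)
Record crown_levels (T : finType) (lt : rel T) (lev : T -> nat) (n : nat) : Prop :=
  CrownLevels {
    lev_le : forall x, lev x <= n;
    lev_mono : forall x y, lt x y -> lev x < lev y;
    level_three : forall k, k <= n -> exists x1 x2 x3,
      [/\ lev x1 = k, lev x2 = k, lev x3 = k & [&& x1 != x2, x1 != x3 & x2 != x3]];
    level_no_four : forall k x1 x2 x3 x4,
      lev x1 = k -> lev x2 = k -> lev x3 = k -> lev x4 = k -> ~~ uniq [:: x1; x2; x3; x4];
    below_one_of_two : forall k y x x', lev y = k.+1 -> lev x = k -> lev x' = k ->
      x != x' -> lt x y || lt x' y;
    above_one_of_two : forall k x y y', lev x = k -> lev y = k.+1 -> lev y' = k.+1 ->
      y != y' -> lt x y || lt x y';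
    exists_not_below : forall k y, lev y = k.+1 -> exists2 x, lev x = k & ~~ lt x y;
    exists_not_above : forall k x, lev x = k -> k < n -> exists2 y, lev y = k.+1 & ~~ lt x y
  }.

Lemma two_of_three_meet (p1 p2 p3 q1 q2 q3 : bool) :
  p1 || p2 -> p1 || p3 -> p2 || p3 -> q1 || q2 -> q1 || q3 -> q2 || q3 ->
  [|| p1 && q1, p2 && q2 | p3 && q3].
Proof. by case: p1; case: p2; case: p3; case: q1; case: q2; case: q3. Qed.

Section CrownLevels.
Variables (T : finType) (lt : rel T) (lev : T -> nat) (n : nat).
Hypotheses (lt_trans : transitive lt) (crown : crown_levels lt lev n).

Lemma lt_of_lev_gap x y : lev x + 2 <= lev y -> lt x y.
Proof.
move=> gap; suff lt_gap d : forall x y, lev y = lev x + d.+2 -> lt x y.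
  by apply: (lt_gap (lev y - lev x - 2)); lia.
clear gap x y; elim: d => [|d IHd] x y lev_y.
- have := lev_le crown y => y_le.
  have [z1 [z2 [z3 [lev1 lev2 lev3 /and3P [ne12 ne13 ne23]]]]] :=
    level_three crown (k := (lev x).+1) ltac:(lia).
  have lev_y' : lev y = (lev x).+2 by lia.
  have x_below i j : lev i = (lev x).+1 -> lev j = (lev x).+1 -> i != j -> lt x i || lt x j.
    by move=> lev_i lev_j; apply: (above_one_of_two crown (erefl _) lev_i lev_j).
  have y_above i j : lev i = (lev x).+1 -> lev j = (lev x).+1 -> i != j -> lt i y || lt j y.
    by move=> lev_i lev_j; apply: (below_one_of_two crown lev_y' lev_i lev_j).
  have := two_of_three_meet (x_below _ _ lev1 lev2 ne12) (x_below _ _ lev1 lev3 ne13)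
    (x_below _ _ lev2 lev3 ne23) (y_above _ _ lev1 lev2 ne12) (y_above _ _ lev1 lev3 ne13)
    (y_above _ _ lev2 lev3 ne23).
  by case/or3P => /andP [x_lt lt_y]; apply: lt_trans lt_y.
- have := lev_le crown y => y_le.
  have [z1 [z2 [_ [lev1 lev2 _ /and3P [ne12 _ _]]]]] :=
    level_three crown (k := lev x + d.+2) ltac:(lia).
  have lev_y' : lev y = (lev x + d.+2).+1 by lia.
  case/orP: (below_one_of_two crown lev_y' lev1 lev2 ne12) => [z_lt | z_lt];
    apply: lt_trans z_lt; apply: IHd; lia.
Qed.

Lemma below_one_of_two_le k y x x' : k < lev y -> lev x = k -> lev x' = k -> x != x' ->
  lt x y || lt x' y.
Proof.
move=> k_lt lev_x lev_x' ne.
have [lev_y | gap] := eqVneq (lev y) k.+1.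
  exact: (below_one_of_two crown lev_y lev_x lev_x' ne).
by rewrite lt_of_lev_gap //; lia.
Qed.

Lemma incomp_lev_le x y : incomp lt x y -> lev x <= (lev y).+1.
Proof.
case/andP=> _ /negP y_lt_x; rewrite leqNgt; apply/negP => gap.
by apply: y_lt_x; apply: lt_of_lev_gap; lia.
Qed.

Lemma incomp_of_lev_eq x y : lev x = lev y -> incomp lt x y.
Proof. by move=> eq_xy; apply/andP; split; apply/negP => /(lev_mono crown); lia. Qed.

Lemma antichain3_lev_eq x y z : antichain3 lt x y z -> lev y = lev x.
Proof.
case/and5P=> _ ne_xz ne_yz inc_xy /andP [inc_xz inc_yz].
have near u v : incomp lt u v -> (lev u <= (lev v).+1) && (lev v <= (lev u).+1).
  by move=> inc_uv; rewrite !incomp_lev_le // incompC.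
move: (near _ _ inc_xy) (near _ _ inc_xz) (near _ _ inc_yz) => /andP [? ?] /andP [? ?] /andP [? ?].
case/andP: inc_xy => nxy nyx; case/andP: inc_xz => nxz nzx; case/andP: inc_yz => nyz nzy.
case: (ltngtP (lev y) (lev x)) => // [y_lt | x_lt].
- have lev_x : lev x = (lev y).+1 by lia.
  have [lev_z | lev_z] : lev z = lev y \/ lev z = lev x by lia.
  + by have := below_one_of_two crown lev_x (erefl _) lev_z ne_yz;
      rewrite (negbTE nyx) (negbTE nzx).
  + by have := above_one_of_two crown (erefl _) lev_x (etrans lev_z lev_x) ne_xz;
      rewrite (negbTE nyx) (negbTE nyz).
- have lev_y : lev y = (lev x).+1 by lia.
  have [lev_z | lev_z] : lev z = lev x \/ lev z = lev y by lia.
  + by have := below_one_of_two crown lev_y (erefl _) lev_z ne_xz;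
      rewrite (negbTE nxy) (negbTE nzy).
  + by have := above_one_of_two crown (erefl _) lev_y (etrans lev_z lev_y) ne_yz;
      rewrite (negbTE nxy) (negbTE nxz).
Qed.

Lemma level_antichain3 a : exists y z, [/\ lev y = lev a, lev z = lev a & antichain3 lt a y z].
Proof.
have [x1 [x2 [x3 [lev1 lev2 lev3 /and3P [ne12 ne13 ne23]]]]] :=
  level_three crown (lev_le crown a).
suff [y [z [lev_y lev_z /and3P [ne_ay ne_az ne_yz]]]] :
    exists y z, [/\ lev y = lev a, lev z = lev a & [&& a != y, a != z & y != z]].
  exists y, z; split => //; rewrite /antichain3 ne_ay ne_az ne_yz.
  by rewrite !incomp_of_lev_eq //; congruence.
have [-> | ne1] := eqVneq a x1.
  by exists x2, x3; split; rewrite ?lev1 ?lev2 ?lev3 // ne12 ne13 ne23.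
have [-> | ne2] := eqVneq a x2.
  by exists x1, x3; split; rewrite ?lev1 ?lev2 ?lev3 // (eq_sym x2) ne12 ne13 ne23.
by exists x1, x2; split; rewrite ?ne1 ?ne2 ?ne12.
Qed.

Lemma two_lower_covers k y : lev y = k.+1 ->
  exists a a', [/\ a != a', lev a = k, lev a' = k, lt a y & lt a' y].
Proof.
move=> lev_y.
have [z1 [z2 [z3 [lev1 lev2 lev3 /and3P [ne12 ne13 ne23]]]]] :=
  level_three crown (k := k) ltac:(have := lev_le crown y; lia).
have := below_one_of_two crown lev_y lev1 lev2 ne12.
have := below_one_of_two crown lev_y lev1 lev3 ne13.
have := below_one_of_two crown lev_y lev2 lev3 ne23.
case: (boolP (lt z1 y)) => lt1; case: (boolP (lt z2 y)) => lt2;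
  case: (boolP (lt z3 y)) => lt3 //= _ _ _;
  by [exists z1, z2 | exists z1, z3 | exists z2, z3].
Qed.

Lemma common_lower_bound k w w' : k < lev w -> k < lev w' ->
  exists x, [/\ lev x = k, lt x w & lt x w'].
Proof.
move=> k_lt_w k_lt_w'.
have [z1 [z2 [z3 [lev1 lev2 lev3 /and3P [ne12 ne13 ne23]]]]] :=
  level_three crown (k := k) ltac:(have := lev_le crown w; lia).
have below u : k < lev u -> [/\ lt z1 u || lt z2 u, lt z1 u || lt z3 u & lt z2 u || lt z3 u].
  by move=> k_lt; split; apply: below_one_of_two_le k_lt _ _ _.
have [w1 w2 w3] := below _ k_lt_w; have [w1' w2' w3'] := below _ k_lt_w'.
case/or3P: (two_of_three_meet w1 w2 w3 w1' w2' w3') => /andP [lt_w lt_w'];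
  by [exists z1 | exists z2 | exists z3].
Qed.

Section LevelUp.
Variables (Q : {set T}) (f : T -> T).
Hypotheses (f_mono : forall x y, leo lt x y -> leo lt (f x) (f y))
  (f_in : forall x, f x \in Q) (f_id : forall q, q \in Q -> f q = q).
Hypotheses (Q_partners : incomp_partners lt Q) (Q_closed : in_antichain3_incomp_closed lt Q).
Variable t : nat.
Hypothesis level_t_in_Q : forall x, lev x = t -> x \in Q.

Lemma level_succ_misses b : lev b = t.+1 -> b \notin Q ->
  forall y, lev y = t.+1 -> y \notin Q.
Proof.
move=> lev_b b_notin y lev_y; apply/negP => y_in.
have [a lev_a a_ny] := exists_not_below crown lev_y.
have inc_ya : incomp lt y a by rewrite /incomp a_ny andbT; apply/negP => /(lev_mono crown); lia.
have [u [v [u_in v_in anti_yuv]]] : in_antichain3 lt Q y.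
  apply: Q_closed (level_t_in_Q lev_a) inc_ya _ => //.
  have [x1 [x2 [lev1 lev2 anti]]] := level_antichain3 a.
  by exists x1, x2; split => //; apply: level_t_in_Q; congruence.
have lev_u := antichain3_lev_eq anti_yuv.
have lev_v : lev v = lev y.
  exact: antichain3_lev_eq (antichain3C23 anti_yuv).
apply/negP: (level_no_four crown lev_b lev_y (etrans lev_u lev_y) (etrans lev_v lev_y)).
have b_ne q : q \in Q -> (b == q) = false.
  by move=> q_in; apply: contraNF b_notin => /eqP ->.
case/and3P: anti_yuv => ne_yu ne_yv /andP [ne_uv _].
by rewrite /= !inE !b_ne // (negbTE ne_yu) (negbTE ne_yv) (negbTE ne_uv).
Qed.

Lemma retract_lifts_level_succ :
  (forall y, lev y = t.+1 -> y \notin Q) -> forall x, lev x = t.+1 -> t.+2 <= lev (f x).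
Proof.
move=> level_succ_notin x lev_x.
have [a [a' [ne lev_a lev_a' a_lt a'_lt]]] := two_lower_covers lev_x.
have le_f c : lev c = t -> lt c x -> leo lt c (f x).
  by move=> lev_c c_lt; rewrite -(f_id (level_t_in_Q lev_c)); apply: f_mono; rewrite /leo c_lt orbT.
have lt_fx : lt a (f x).
  case/orP: (le_f a lev_a a_lt) => [/eqP a_eq | //].
  case/orP: (le_f a' lev_a' a'_lt) => [/eqP a'_eq | /(lev_mono crown)]; last by rewrite -a_eq; lia.
  by rewrite a'_eq -a_eq eqxx in ne.
have := lev_mono crown lt_fx; rewrite lev_a => t_lt.
have [lev_fx | ] := eqVneq (lev (f x)) t.+1; last by lia.
by have := level_succ_notin _ lev_fx; rewrite f_in.
Qed.

Lemma level_succ_in_retract x : lev x = t.+1 -> x \in Q.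
Proof.
move=> lev_x; apply/negPn/negP => x_notin.
have level_succ_notin := level_succ_misses lev_x x_notin.
set P := fun z => (z \in Q) && (t.+2 <= lev z).
have P_f c : lev c = t.+1 -> P (f c).
  by move=> lev_c; rewrite /P f_in retract_lifts_level_succ.
case: (arg_minnP lev (P_f x lev_x)) => e /andP [e_in e_lev] e_min.
have [e' e'_in /andP [ne inc_ee']] := Q_partners e_in.
have e'_lev : t.+2 <= lev e'.
  have := incomp_lev_le inc_ee'.
  have [lev_e' | ] := eqVneq (lev e') t.+1; last by lia.
  by rewrite (negbTE (level_succ_notin _ lev_e')) in e'_in.
have [z [lev_z z_lt_e z_lt_e']] := common_lower_bound (k := t.+1) e_lev e'_lev.
have le_fz c : c \in Q -> lt z c -> leo lt (f z) c.
  by move=> c_in z_lt; rewrite -(f_id c_in); apply: f_mono; rewrite /leo z_lt orbT.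
have e_le_fz := e_min _ (P_f z lev_z).
case/orP: (le_fz e e_in z_lt_e) => [/eqP fz_eq | /(lev_mono crown)]; last by lia.
case/orP: (le_fz e' e'_in z_lt_e') => [/eqP fz_eq' | ]; first by rewrite -fz_eq -fz_eq' eqxx in ne.
by rewrite fz_eq; case/andP: inc_ee' => /negbTE ->.
Qed.

End LevelUp.

End CrownLevels.

Lemma crown_levels_dual (T : finType) (lt : rel T) (lev : T -> nat) (n : nat) :
  crown_levels lt lev n -> crown_levels (fun x y => lt y x) (fun x => n - lev x) n.
Proof.
case=> le mono three no_four below above not_below not_above; split => /=.
- by move=> x; apply: leq_subr.
- by move=> x y /mono; move: (le x) (le y); lia.
- move=> k k_le; have [x1 [x2 [x3 [lev1 lev2 lev3 ne]]]] := three (n - k) (leq_subr k n).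
  by exists x1, x2, x3; split => //=; move: (le x1) (le x2) (le x3); lia.
- move=> k x1 x2 x3 x4 lev1 lev2 lev3 lev4.
  by apply: (no_four (n - k)); move: (le x1) (le x2) (le x3) (le x4); lia.
- move=> k y x x' lev_y lev_x lev_x' ne.
  by apply: (above (lev y)) ne => //; move: (le x) (le x') (le y); lia.
- move=> k x y y' lev_x lev_y lev_y' ne.
  by apply: (below (lev x).-1) ne; move: (le x) (le y) (le y'); lia.
- move=> k y lev_y; have [|x lev_x y_nlt] := not_above (lev y) y erefl; first by move: (le y); lia.
  by exists x => //; move: (le x) (le y); lia.
- move=> k x lev_x k_lt; have [|y lev_y x_nlt] := not_below (lev x).-1 x _.
    by move: (le x); lia.
  by exists y => //; move: (le x) (le y); lia.
Qed.

Lemma incomp_flip (T : finType) (lt : rel T) x y :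
  incomp (fun x y => lt y x) x y = incomp lt x y.
Proof. exact: incompC. Qed.

Lemma in_antichain3_flip (T : finType) (lt : rel T) (Q : {set T}) x :
  in_antichain3 (fun x y => lt y x) Q x -> in_antichain3 lt Q x.
Proof.
case=> y [z [y_in z_in anti]]; exists y, z; split => //.
by move: anti; rewrite /antichain3 (incomp_flip lt x y) (incomp_flip lt x z) (incomp_flip lt y z).
Qed.

Lemma incomp_partners_flip (T : finType) (lt : rel T) (Q : {set T}) :
  incomp_partners lt Q -> incomp_partners (fun x y => lt y x) Q.
Proof.
move=> Q_partners q q_in; have [q' q'_in ne_inc] := Q_partners q q_in.
by exists q' => //; rewrite incomp_flip.
Qed.

Lemma in_antichain3_incomp_closed_flip (T : finType) (lt : rel T) (Q : {set T}) :
  in_antichain3_incomp_closed lt Q -> in_antichain3_incomp_closed (fun x y => lt y x) Q.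
Proof.
move=> Q_closed q x q_in x_in inc anti.
apply: (in_antichain3_flip (lt := fun x y => lt y x)).
by apply: Q_closed q_in x_in _ (in_antichain3_flip anti); rewrite -incomp_flip.
Qed.

Section AllLevels.
Variables (T : finType) (lt : rel T) (lev : T -> nat) (n : nat) (Q : {set T}) (f : T -> T).
Hypotheses (lt_trans : transitive lt) (crown : crown_levels lt lev n).
Hypotheses (f_mono : forall x y, leo lt x y -> leo lt (f x) (f y))
  (f_in : forall x, f x \in Q) (f_id : forall q, q \in Q -> f q = q).
Hypotheses (Q_partners : incomp_partners lt Q) (Q_closed : in_antichain3_incomp_closed lt Q).

Lemma level_pred_in_retract t : t < n -> (forall x, lev x = t.+1 -> x \in Q) ->
  forall x, lev x = t -> x \in Q.
Proof.
move=> t_lt level_in x lev_x.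
have flip_trans : transitive (fun x y => lt y x).
  by move=> y x' z lt_yx lt_zy; apply: lt_trans lt_zy lt_yx.
have flip_mono x' y : leo (fun x y => lt y x) x' y -> leo (fun x y => lt y x) (f x') (f y).
  by rewrite /leo (eq_sym x') (eq_sym (f x')); apply: f_mono.
apply: (level_succ_in_retract flip_trans (crown_levels_dual crown) flip_mono f_in f_id
  (incomp_partners_flip Q_partners) (in_antichain3_incomp_closed_flip Q_closed) (t := n - t.+1)).
- by move=> y lev_y; apply: level_in; move: (lev_le crown y); lia.
- by move: (lev_le crown x); lia.
Qed.

Lemma retract_levels_all i : i <= n -> (forall x, lev x = i -> x \in Q) -> Q = [set: T].
Proof.
move=> i_le level_i_in; apply/setP => x; rewrite inE.
have up d : forall y, lev y = i + d -> y \in Q.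
  elim: d => [|d IHd] y lev_y; first by apply: level_i_in; lia.
  apply: (level_succ_in_retract lt_trans crown f_mono f_in f_id Q_partners Q_closed
    (t := i + d)) => [z lev_z | ]; [apply: IHd | ]; lia.
have down d : d <= i -> forall y, lev y = i - d -> y \in Q.
  elim: d => [|d IHd] d_le y lev_y; first by apply: level_i_in; lia.
  apply: (level_pred_in_retract (t := i - d.+1)) => [| z lev_z | ]; [| apply: IHd |]; lia.
case: (leqP i (lev x)) => [i_le_x | x_lt_i].
- by apply: (up (lev x - i)); lia.
- by apply: (down (i - lev x)); lia.
Qed.

End AllLevels.

Section Rank.
Variables (T : finType) (lt : rel T).
Hypothesis lt_spo : spo lt.

Lemma chain_toP p m :
  reflect (exists s, [/\ size s = m.+1, sorted lt s & last p s = p]) (chain_to lt p m).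
Proof.
apply: (iffP existsP) => [[s /andP [s_sorted /eqP s_last]] | [s [s_size s_sorted s_last]]].
  by exists (val s); rewrite size_tuple.
have s_size' : size s == m.+1 by apply/eqP.
by exists (Tuple s_size'); rewrite /= s_sorted s_last eqxx.
Qed.

Lemma sorted_size_le_card s : sorted lt s -> size s <= #|T|.
Proof.
case: lt_spo => lt_irr lt_tr s_sorted.
by rewrite -(card_uniqP (sorted_uniq lt_tr lt_irr s_sorted)) max_card.
Qed.

Lemma rk_ge p m : chain_to lt p m -> m <= rk lt p.
Proof.
move=> chain_m; have /chain_toP [s [s_size s_sorted _]] := chain_m.
have m_lt : m < #|T| by rewrite -s_size sorted_size_le_card.
exact: (@leq_bigmax_cond _ (fun m : 'I_#|T| => chain_to lt p m) val (Ordinal m_lt)).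
Qed.

Lemma chain_to0 p : chain_to lt p 0.
Proof. by apply/chain_toP; exists [:: p]. Qed.

Lemma chain_to_rk p : chain_to lt p (rk lt p).
Proof.
have card_gt0 : 0 < #|T| by apply/card_gt0P; exists p.
rewrite /rk (bigmax_eq_arg (Ordinal card_gt0)) ?chain_to0 //.
by case: arg_maxnP => //; exact: chain_to0.
Qed.

Lemma rk_lt x y : lt x y -> rk lt x < rk lt y.
Proof.
move=> lt_xy; apply: rk_ge.
have /chain_toP [s [s_size s_sorted s_last]] := chain_to_rk x.
case: s s_size s_sorted s_last => [//|h s] s_size s_sorted s_last.
apply/chain_toP; exists (h :: rcons s y); split.
- by rewrite /= size_rcons; case: s_size => ->.
- by rewrite /= rcons_path; move: s_sorted s_last => /= -> ->.
- by rewrite /= last_rcons.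
Qed.

Definition is_chainb (C : {set T}) :=
  [forall x in C, forall y in C, (x != y) ==> lt x y || lt y x].

Lemma is_chainP C : reflect (is_chain lt C) (is_chainb C).
Proof.
apply: (iffP forall_inP) => [chainC x y x_in y_in | chainC x x_in].
  by move: (chainC x x_in) => /forall_inP /(_ y y_in) /implyP.
by apply/forall_inP => y y_in; apply/implyP; apply: chainC.
Qed.

Lemma sorted_is_chain s : sorted lt s -> is_chain lt [set z in s].
Proof.
case: lt_spo => _ lt_tr s_sorted x y; rewrite !inE => x_in y_in ne_xy.
have lt_nth := sorted_ltn_nth lt_tr x s_sorted.
have ix := index_mem x s; have iy := index_mem y s.
rewrite x_in in ix; rewrite y_in in iy.
case: (ltngtP (index x s) (index y s)) => idx.
- by have := lt_nth _ _ ix iy idx; rewrite !nth_index // => ->.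
- by have := lt_nth _ _ iy ix idx; rewrite !nth_index // => ->; rewrite orbT.
- by move: ne_xy; rewrite -(nth_index x x_in) -(nth_index x y_in) idx eqxx.
Qed.

Lemma rk_le_of_ranked n : ranked_of lt n -> forall x, rk lt x <= n.
Proof.
move=> ranked x; case: lt_spo => lt_irr lt_tr.
have /chain_toP [s [s_size s_sorted _]] := chain_to_rk x.
set C := [set z in s].
have ext_C : is_chainb C && (C \subset C) by rewrite subxx andbT; apply/is_chainP/sorted_is_chain.
case: (@arg_maxnP _ C (fun D => is_chainb D && (C \subset D)) (fun D => #|D|) ext_C)
  => D /andP [/is_chainP chainD sub_CD] D_max.
have maxD : maximal_chain lt D.
  split=> // E chainE sub_DE; apply/eqP; rewrite eq_sym eqEcard sub_DE /=.
  by apply: D_max; rewrite (subset_trans sub_CD sub_DE) andbT; apply/is_chainP.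
have := subset_leq_card sub_CD; rewrite (ranked _ maxD) cardsE.
by rewrite (card_uniqP (sorted_uniq lt_tr lt_irr s_sorted)) s_size.
Qed.

End Rank.

Ltac case_I6 a := case: a => [[|[|[|[|[|[|?]]]]]] ?].

Lemma c6_upper_exists (a : 'I_6) : a < 3 -> exists b, c6_lt a b.
Proof.
by case_I6 a => // _;
  [exists (@Ordinal 6 3 isT) | exists (@Ordinal 6 4 isT) | exists (@Ordinal 6 5 isT)].
Qed.

Lemma c6_lower_exists (b : 'I_6) : 3 <= b -> exists a, c6_lt a b.
Proof.
by case_I6 b => // _;
  [exists (@Ordinal 6 0 isT) | exists (@Ordinal 6 1 isT) | exists (@Ordinal 6 2 isT)].
Qed.

Lemma c6_exists_not_below (b : 'I_6) : 3 <= b -> exists2 a : 'I_6, a < 3 & ~~ c6_lt a b.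
Proof.
by case_I6 b => // _;
  [exists (@Ordinal 6 2 isT) | exists (@Ordinal 6 0 isT) | exists (@Ordinal 6 1 isT)].
Qed.

Lemma c6_exists_not_above (a : 'I_6) : a < 3 -> exists2 b : 'I_6, 3 <= b & ~~ c6_lt a b.
Proof.
by case_I6 a => // _;
  [exists (@Ordinal 6 4 isT) | exists (@Ordinal 6 5 isT) | exists (@Ordinal 6 3 isT)].
Qed.

Lemma c6_below_one_of_two (a a' b : 'I_6) :
  a < 3 -> a' < 3 -> 3 <= b -> a != a' -> c6_lt a b || c6_lt a' b.
Proof. by case_I6 a; case_I6 a'; case_I6 b. Qed.

Lemma c6_above_one_of_two (a b b' : 'I_6) :
  a < 3 -> 3 <= b -> 3 <= b' -> b != b' -> c6_lt a b || c6_lt a b'.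
Proof. by case_I6 a; case_I6 b; case_I6 b'. Qed.

Section SixStack.
Variables (T : finType) (lt : rel T) (n : nat).
Hypotheses (lt_spo : spo lt) (n_gt0 : 0 < n) (ranked : ranked_of lt n)
  (crown_bands : forall k, k < n -> iso_sub lt c6_lt (Pband lt k k.+1)).

Lemma stack_band k : k < n -> exists g : 'I_6 -> T,
  [/\ injective g, (forall a b, lt (g a) (g b) = c6_lt a b),
      (forall a, rk lt (g a) = if a < 3 then k else k.+1),
      (forall x, rk lt x = k -> exists2 a, g a = x & a < 3)
    & (forall x, rk lt x = k.+1 -> exists2 a, g a = x & 3 <= a)].
Proof.
move=> k_lt; have [g [g_inj g_band g_onto g_lt]] := crown_bands k_lt.
have rk_band a : k <= rk lt (g a) <= k.+1 by have := g_band a; rewrite inE.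
have g_rk a : rk lt (g a) = if a < 3 then k else k.+1.
  case: ifP => [a_lt | /negbT]; last rewrite -leqNgt => a_ge.
  - have [b] := c6_upper_exists a_lt; rewrite g_lt => /(rk_lt lt_spo).
    by move: (rk_band a) (rk_band b); lia.
  - have [b] := c6_lower_exists a_ge; rewrite g_lt => /(rk_lt lt_spo).
    by move: (rk_band a) (rk_band b); lia.
exists g; split=> // [x rk_x | x rk_x];
  (have [|a g_a] := g_onto x; first by rewrite inE rk_x; lia); exists a => //;
  move: rk_x; rewrite -g_a g_rk; case: ifP => [// | /negbT]; rewrite -?leqNgt //; lia.
Qed.

Lemma stack_crown_levels : crown_levels lt (rk lt) n.
Proof.
have rk_le := rk_le_of_ranked lt_spo ranked.
have band_of_rk k x : rk lt x = k.+1 -> k < n by move=> rk_x; move: (rk_le x); lia.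
split=> //.
- exact: rk_lt.
- move=> k k_le; case: (ltnP k n) => [k_lt | n_le].
  + have [g [g_inj _ g_rk _ _]] := stack_band k_lt.
    exists (g (@Ordinal 6 0 isT)), (g (@Ordinal 6 1 isT)), (g (@Ordinal 6 2 isT)).
    by rewrite !g_rk !(inj_eq g_inj).
  + have [g [g_inj _ g_rk _ _]] := stack_band (k := n.-1) ltac:(lia).
    exists (g (@Ordinal 6 3 isT)), (g (@Ordinal 6 4 isT)), (g (@Ordinal 6 5 isT)).
    by rewrite !g_rk !(inj_eq g_inj) /=; split=> //; lia.
- move=> k x1 x2 x3 x4 rk1 rk2 rk3 rk4.
  case: (ltnP k n) => [k_lt | n_le].
  + have [g [g_inj _ _ g_lower _]] := stack_band k_lt.
    have [[a1 <- a1_lt] [a2 <- a2_lt]] := (g_lower _ rk1, g_lower _ rk2).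
    have [[a3 <- a3_lt] [a4 <- a4_lt]] := (g_lower _ rk3, g_lower _ rk4).
    rewrite (map_inj_uniq g_inj [:: a1; a2; a3; a4]) /= !inE -!val_eqE /=; lia.
  + have [g [g_inj _ _ _ g_upper]] := stack_band (k := n.-1) ltac:(lia).
    have rk_n x : rk lt x = k -> rk lt x = n.-1.+1 by move: (rk_le x1); lia.
    have [[a1 <- a1_lt] [a2 <- a2_lt]] := (g_upper _ (rk_n _ rk1), g_upper _ (rk_n _ rk2)).
    have [[a3 <- a3_lt] [a4 <- a4_lt]] := (g_upper _ (rk_n _ rk3), g_upper _ (rk_n _ rk4)).
    move: (ltn_ord a1) (ltn_ord a2) (ltn_ord a3) (ltn_ord a4).
    rewrite (map_inj_uniq g_inj [:: a1; a2; a3; a4]) /= !inE -!val_eqE /=; lia.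
- move=> k y x x' rk_y rk_x rk_x'.
  have [g [g_inj g_lt _ g_lower g_upper]] := stack_band (band_of_rk _ _ rk_y).
  have [b <- b_ge] := g_upper _ rk_y.
  have [a <- a_lt] := g_lower _ rk_x; have [a' <- a'_lt] := g_lower _ rk_x'.
  by rewrite (inj_eq g_inj) !g_lt; apply: c6_below_one_of_two.
- move=> k x y y' rk_x rk_y rk_y'.
  have [g [g_inj g_lt _ g_lower g_upper]] := stack_band (band_of_rk _ _ rk_y).
  have [a <- a_lt] := g_lower _ rk_x.
  have [b <- b_ge] := g_upper _ rk_y; have [b' <- b'_ge] := g_upper _ rk_y'.
  by rewrite (inj_eq g_inj) !g_lt; apply: c6_above_one_of_two.
- move=> k y rk_y.
  have [g [_ g_lt g_rk _ g_upper]] := stack_band (band_of_rk _ _ rk_y).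
  have [b <- b_ge] := g_upper _ rk_y; have [a a_lt a_nlt] := c6_exists_not_below b_ge.
  by exists (g a); rewrite ?g_rk ?a_lt ?g_lt.
- move=> k x rk_x k_lt.
  have [g [_ g_lt g_rk g_lower _]] := stack_band k_lt.
  have [a <- a_lt] := g_lower _ rk_x; have [b b_ge b_nlt] := c6_exists_not_above a_lt.
  by exists (g b); rewrite ?g_rk ?g_lt // ltnNge b_ge.
Qed.

End SixStack.

Lemma ordS_uniq (i : 'I_3) : uniq [:: i; ordS i; ordS (ordS i)].
Proof. by case: i => [[|[|[|?]]] ?]. Qed.

Section Tower.
Variables (T : finType) (lt : rel T).

Lemma section_in_antichain3 (S : {set T}) n (ltS : rel ('I_3 * 'I_n.+1)) q :
  is_section_order ltS -> iso_sub lt ltS S -> q \in S ->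
  exists y z, [/\ y \in S, z \in S & antichain3 lt q y z].
Proof.
case=> _ _ level_antichain _ _ [g [g_inj g_in g_onto g_lt]] q_in.
have [[i k] <-] := g_onto q q_in.
exists (g (ordS i, k)), (g (ordS (ordS i), k)); split=> //.
have := ordS_uniq i; rewrite /antichain3 /incomp -!g_lt !level_antichain !(inj_eq g_inj).
by rewrite !xpair_eqE !eqxx !andbT /= !inE; case/and3P=> /norP [-> ->] ->.
Qed.

Lemma antichain2_no_three (S : {set T}) x y z : iso_sub lt antichain2_lt S ->
  x \in S -> y \in S -> z \in S -> ~~ [&& x != y, x != z & y != z].
Proof.
case=> g [g_inj _ g_onto _] x_in y_in z_in.
have [[bx <-] [by_ <-]] := (g_onto x x_in, g_onto y y_in); have [bz <-] := g_onto z z_in.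
by rewrite !(inj_eq g_inj); case: bx; case: by_; case: bz.
Qed.

Lemma iso_section_incomp_partner (S : {set T}) q : iso_section lt S -> q \in S ->
  exists2 q', q' \in S & (q' != q) && incomp lt q q'.
Proof.
case=> [[g [g_inj g_in g_onto g_lt]] | [n [_ [ltS [ltS_section ltS_iso]]]]] q_in.
  have [b <-] := g_onto q q_in.
  by exists (g (~~ b)); rewrite // (inj_eq g_inj) /incomp -!g_lt; case: b.
have [y [z [y_in _ /and5P [ne_qy _ _ inc_qy _]]]] := section_in_antichain3 ltS_section ltS_iso q_in.
by exists y; rewrite // eq_sym ne_qy.
Qed.

Variable Q : {set T}.
Hypothesis tower : iso_tower lt Q.

Lemma tower_incomp_partners : incomp_partners lt Q.
Proof.
case: tower => k [blk [_ blk_lt block_section _]] q q_in.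
have q_blk : q \in [set p in Q | blk p == blk q] by rewrite inE q_in eqxx.
have [q' ] := iso_section_incomp_partner (block_section _ (blk_lt q q_in)) q_blk.
by rewrite inE => /andP [q'_in _]; exists q'.
Qed.

Lemma tower_in_antichain3_incomp_closed : in_antichain3_incomp_closed lt Q.
Proof.
case: tower => k [blk [_ blk_lt block_section blk_mono]] q x q_in x_in inc_qx.
move=> [y [z [y_in z_in anti]]].
have same_blk p r : p \in Q -> r \in Q -> incomp lt p r -> blk p = blk r.
  move=> p_in r_in /andP [/negP p_nlt /negP r_nlt].
  by case: (ltngtP (blk p) (blk r)) => // blk_pr; [case: p_nlt | case: r_nlt]; apply: blk_mono.
set B := [set p in Q | blk p == blk q].
have in_B p : p \in Q -> blk p = blk q -> p \in B by move=> p_in blk_p; rewrite inE p_in blk_p eqxx.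
case/and5P: anti => ne_xy ne_xz ne_yz inc_xy /andP [inc_xz _].
have blk_x := esym (same_blk _ _ q_in x_in inc_qx).
have [x_B y_B z_B] : [/\ x \in B, y \in B & z \in B].
  have [blk_y blk_z] := (same_blk _ _ x_in y_in inc_xy, same_blk _ _ x_in z_in inc_xz).
  by split; apply: in_B; rewrite // -?blk_y -?blk_z.
case: (block_section _ (blk_lt q q_in)) => [two | [n [_ [ltS [ltS_section ltS_iso]]]]].
  by case/negP: (antichain2_no_three two x_B y_B z_B); rewrite ne_xy ne_xz.
have [u [v [u_B v_B anti_quv]]] := section_in_antichain3 ltS_section ltS_iso (in_B q q_in erefl).
by exists u, v; split=> //; [move: u_B | move: v_B]; rewrite inE => /andP [].
Qed.

End Tower.

Theorem lemma5p4 (T : finType) (lt : rel T) (Q : {set T}) (i : nat) :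
  spo lt -> six_stack lt -> retract lt Q -> iso_tower lt Q ->
  Plevel lt i != set0 -> Plevel lt i \subset Q ->
  Q = [set: T].
Proof.
move=> lt_spo [n [n_gt0 ranked crown_bands]] [f [f_mono f_in f_id]] tower level_ne level_sub.
have crown := stack_crown_levels lt_spo n_gt0 ranked crown_bands.
have i_le : i <= n.
  have [p] := set0Pn _ level_ne; rewrite inE => /andP [i_le _].
  exact: leq_trans i_le (lev_le crown p).
apply: (retract_levels_all (proj2 lt_spo) crown f_mono f_in f_id
  (tower_incomp_partners tower) (tower_in_antichain3_incomp_closed tower) i_le).
by move=> x rk_x; apply: (subsetP level_sub); rewrite inE rk_x leqnn.
Qed.
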